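(* Let $l_1\geq l_2\geq 3$ be integers. Let $U_1(l_1,l_2)$ be the graph obtained from the cycle $C_{l_1}$ by attaching a pendent path of length $l_2$ at a vertex $u$ of the cycle, and $U_2(l_1,l_2)$ the graph obtained from the cycle $C_{l_2}$ by attaching a pendent path of length $l_1$ at a vertex $v$ of the cycle. Then $$n(U_1(l_1,l_2))\geq n(U_2(l_1,l_2))\quad\text{and}\quad n(u,U_1(l_1,l_2))\geq n(v,U_2(l_1,l_2)),$$ with equality if and only if $l_1=l_2$.
   Context: A pendent path of length $\ell$ attached at $w$ consists of $\ell$ new vertices $x_1,\dots,x_\ell$ and edges $wx_1,\dots,x_{\ell-1}x_\ell$. A subtree of a graph $G$ is a subgraph that is a tree (distinguished as subgraphs); $n(G)$ is the number of subtrees of $G$, counting also the empty subtree, and $n(x,G)$ is the number of subtrees of $G$ containing the vertex $x$. *)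

From HB Require Import structures.
From mathcomp Require Import all_boot.
From mathcomp Require Import boolp.

Set Implicit Arguments.
Unset Strict Implicit.
Unset Printing Implicit Defensive.

Section Subtrees.
Variable V : finType.

(* A simple graph on V is given by its edge set E, a set of 2-subsets of V. *)

Definition adjE (F : {set {set V}}) : rel V := fun x y => [set x; y] \in F.

Definition has_cycle (F : {set {set V}}) : Prop :=
  exists (x : V) (p : seq V),
    [/\ uniq (x :: p), 2 <= size p, path (adjE F) x p & adjE F (last x p) x].

Definition is_subgraph (E : {set {set V}}) (S : {set V}) (F : {set {set V}}) : bool :=
  (F \subset E) && [forall e in F, e \subset S].

Definition is_tree (S : {set V}) (F : {set {set V}}) : Prop :=
  [/\ S != set0, {in S &, forall x y, connect (adjE F) x y} & ~ has_cycle F].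

Definition subtrees (E : {set {set V}}) : {set {set V} * {set {set V}}} :=
  [set SF | is_subgraph E SF.1 SF.2 && `[< is_tree SF.1 SF.2 >]].

(* n(G): number of subtrees, counting also the empty subtree *)
Definition n_sub (E : {set {set V}}) : nat := #|subtrees E| + 1.

Definition n_sub_at (E : {set {set V}}) (x : V) : nat :=
  #|[set SF in subtrees E | x \in SF.1]|.

End Subtrees.

(* Cycle C_a on vertices 0..a-1 (edges i ~ i+1 mod a), with a pendent path of
   length b attached at vertex 0: new vertices a, ..., a+b-1, edges 0 ~ a and
   a+k ~ a+k+1. Vertex type 'I_(a+b). *)
Definition cpp_adj (a b x y : nat) : bool :=
  [|| [&& x < a, y < a & y == x.+1 %% a],
      [&& x == 0, y == a & 0 < b] |
      [&& a <= x, y == x.+1 & y < a + b]].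

Definition cpp_edges (a b : nat) : {set {set 'I_(a + b)}} :=
  [set e : {set 'I_(a + b)} | [exists x : 'I_(a + b), exists y : 'I_(a + b),
     (e == [set x; y]) && cpp_adj a b x y]].

(* Adding a new edge {x, y} to a graph creates exactly the subtrees obtained by joining
   through it a subtree containing x and a disjoint subtree containing y ([bridge]); the
   inverse map deletes the edge and keeps the components of x and y ([cut]).  In
   particular, hanging a new leaf y at x adds one subtree for each subtree through x.
   Growing a path leaf by leaf, while tracking the subtrees through its end, through a
   fixed root, and the disjoint pairs of subtrees through both, shows that the cycle C_a
   (a path closed by one edge) with a pendent path of length b at its vertex 0 has
     n(0, U) = (b + 1) C(a + 1, 2)   and   n(U) = a^2 + C(b + 1, 2) + b C(a + 1, 2) + 1.
   Exchanging a > b lowers these by (a - b)(a + 1)(b + 1)/2 and (a - b)(ab + a + b - 1)/2. *)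

From mathcomp Require Import all_boot boolp zify.

Set Implicit Arguments.
Unset Strict Implicit.
Unset Printing Implicit Defensive.

Lemma disjointsU1 (T : finType) (A B : {set T}) y :
  [disjoint A & B :|: [set y]] = [disjoint A & B] && (y \notin A).
Proof.
by rewrite disjoint_sym disjoints_subset subUset sub1set -disjoints_subset disjoint_sym inE.
Qed.

Section Subtrees.
Variable V : finType.
Implicit Types (E F : {set {set V}}) (S C : {set V}) (x y u v w : V).

Local Notation graph := ({set V} * {set {set V}})%type.

Lemma adjE_sym F : symmetric (adjE F).
Proof. by move=> x y; rewrite /adjE setUC. Qed.

Lemma connect_adjEC F x y : connect (adjE F) x y = connect (adjE F) y x.
Proof. exact: (sym_connect_sym (@adjE_sym F)). Qed.

Lemma connect_adjE_subset F F' x y :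
  F \subset F' -> connect (adjE F) x y -> connect (adjE F') x y.
Proof.
by move=> sFF'; apply: connect_sub => u v uv; apply: connect1; apply: (subsetP sFF').
Qed.

Lemma connect_closed F C x y :
  (forall u v, u \in C -> adjE F u v -> v \in C) ->
  x \in C -> connect (adjE F) x y -> y \in C.
Proof.
move=> closedC xC /connectP [p + ->]; elim: p x xC => //= z p IHp x xC /andP [xz].
exact/IHp/(closedC x).
Qed.

Lemma sub_path_closed (r r' : rel V) C x p :
  (forall u v, u \in C -> r u v -> r' u v /\ v \in C) ->
  x \in C -> path r x p -> path r' x p.
Proof.
move=> closedC; elim: p x => //= y p IHp x xC /andP [xy yp].
by have [-> yC] := closedC _ _ xC xy; apply: IHp.
Qed.

Definition simple_cycle F (c : seq V) := [&& uniq c, 2 < size c & cycle (adjE F) c].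

Lemma has_cycleP F : has_cycle F <-> exists c, simple_cycle F c.
Proof.
split=> [[x [p [uxp sp xp px]]] | [[|x p] //]].
  by exists (x :: p); rewrite /simple_cycle uxp ltnS sp /= rcons_path xp px.
by rewrite /simple_cycle /= ltnS rcons_path => /and4P [uxp sp xp px]; exists x, p.
Qed.

Lemma simple_cycle_rot F c x :
  simple_cycle F c -> x \in c -> exists p, simple_cycle F (x :: p).
Proof.
move=> cycF /rot_to [i p rot_c]; exists p; rewrite -rot_c.
by move: cycF; rewrite /simple_cycle rot_uniq size_rot rot_cycle.
Qed.

Lemma has_cycle_subset F F' : F \subset F' -> has_cycle F -> has_cycle F'.
Proof.
move=> sFF' /has_cycleP [[|x p] // /and3P [uc sc cc]]; apply/has_cycleP.
exists (x :: p); rewrite /simple_cycle uc sc /=.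
by apply: sub_path cc => u v; apply: (subsetP sFF').
Qed.

Lemma has_cycle_of_connect F x y : x != y -> [set x; y] \in F ->
  connect (adjE (F :\ [set x; y])) x y -> has_cycle F.
Proof.
move=> xy xyF /connectP [p xp]; case: (shortenP xp) => q xq uq _ y_q; subst y; clear xp.
exists x, q; split=> //; last by rewrite adjE_sym.
- case: q xy xyF xq uq => [|z [|t q]] //=; first by rewrite eqxx.
  by move=> _ _; rewrite andbT /adjE in_setD1 eqxx.
- by apply: sub_path xq => u v; rewrite /adjE in_setD1 => /andP [].
Qed.

Lemma path_setU1_avoid F x y h p : x \notin h :: p ->
  path (adjE ([set x; y] |: F)) h p -> path (adjE F) h p.
Proof.
move=> xNp; apply: (sub_in_path (P := predC1 x)); last first.
  by apply/allP => u up; apply: contraNneq xNp => <-.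
move=> u v /= ux vx; rewrite /adjE in_setU1 => /orP [/eqP uvxy | //].
by have := set21 x y; rewrite -uvxy in_set2 !(eq_sym x) (negbTE ux) (negbTE vx).
Qed.

Lemma adjE_disjointU S1 S2 F1 F2 u v :
  {in F1, forall f : {set V}, f \subset S1} -> {in F2, forall f : {set V}, f \subset S2} ->
  [disjoint S1 & S2] -> u \in S1 -> adjE (F1 :|: F2) u v -> adjE F1 u v /\ v \in S1.
Proof.
move=> F1S1 F2S2 S12 uS1; rewrite /adjE inE => /orP [uvF1 | /F2S2].
  by have := F1S1 _ uvF1; rewrite subUset !sub1set => /andP [].
by rewrite subUset sub1set (disjointFr S12 uS1).
Qed.

Section DisjointUnion.
Variables (S1 S2 : {set V}) (F1 F2 : {set {set V}}).
Hypotheses (F1S1 : {in F1, forall f : {set V}, f \subset S1})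
           (F2S2 : {in F2, forall f : {set V}, f \subset S2}).
Hypothesis S12 : [disjoint S1 & S2].

Let S21 : [disjoint S2 & S1]. Proof. by rewrite disjoint_sym. Qed.

Let closed1 u v : u \in S1 -> adjE (F1 :|: F2) u v -> v \in S1.
Proof. by move=> uS1 /(adjE_disjointU F1S1 F2S2 S12 uS1) []. Qed.

Let closed2 u v : u \in S2 -> adjE (F1 :|: F2) u v -> v \in S2.
Proof. by move=> uS2; rewrite setUC => /(adjE_disjointU F2S2 F1S1 S21 uS2) []. Qed.

Lemma has_cycle_disjointU : has_cycle (F1 :|: F2) -> has_cycle F1 \/ has_cycle F2.
Proof.
move=> /has_cycleP [[|h p] // /and3P [uc sc cc]].
have restrict S F : (forall u v, u \in S -> adjE (F1 :|: F2) u v -> adjE F u v /\ v \in S) ->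
    h \in S -> has_cycle F.
  move=> closedS hS; apply/has_cycleP; exists (h :: p); rewrite /simple_cycle uc sc /=.
  exact: sub_path_closed closedS hS cc.
have [z] : exists z, adjE (F1 :|: F2) h z.
  by move: sc cc; case: (p) => [|z q] //= _ /andP [hz _]; exists z.
rewrite /adjE inE => /orP [/F1S1 | /F2S2]; rewrite subUset sub1set => /andP [hS _].
  by left; apply: restrict hS => u v; apply: adjE_disjointU F1S1 F2S2 S12.
by right; apply: restrict hS => u v; rewrite setUC; apply: adjE_disjointU F2S2 F1S1 S21.
Qed.

Lemma has_cycle_bridge x y : x \in S1 -> y \in S2 ->
  has_cycle ([set x; y] |: (F1 :|: F2)) -> has_cycle (F1 :|: F2).
Proof.
move=> xS1 yS2 /has_cycleP [c cyc_c]; apply/has_cycleP.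
set G := [set x; y] |: _ in cyc_c.
have at_x u : u != x -> u != y -> adjE G x u -> adjE (F1 :|: F2) x u.
  move=> ux uy; rewrite /adjE in_setU1 => /orP [/eqP xuxy | //].
  by have := set22 x u; rewrite xuxy in_set2 (negbTE ux) (negbTE uy).
have avoid_x := @path_setU1_avoid _ x y.
have [xc | xNc] := boolP (x \in c); last first.
  case: c cyc_c xNc => [|h p] // /and3P [uc sc cc] xNc; exists (h :: p).
  rewrite /simple_cycle uc sc /=; apply: avoid_x cc.
  by apply: contra xNc; rewrite in_cons mem_rcons => /orP [/eqP -> | //]; exact: mem_head.
(* Rotate the cycle to start at x.  If it leaves x towards y, its remaining part joins y
   back to x inside F1 :|: F2, which cannot cross from S2 to S1; otherwise no step uses
   the edge {x, y}. *)
have [p /and3P []] := simple_cycle_rot cyc_c xc; case: p => [|p1 [|q1 q]] // uxp _.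
rewrite /= rcons_path => /and4P [xp1 p1q1 q1q qx].
set pm := last q1 q in qx.
move: (uxp); rewrite /= !inE !negb_or.
case/andP => /and3P [x_p1 x_q1 x_q] /andP [/andP [p1_q1 p1_q] _].
have pm_q : pm \in q1 :: q := mem_last q1 q.
have pm_p1 : pm != p1 by apply: contraTneq pm_q => ->; rewrite inE negb_or p1_q1.
have pm_x : pm != x by apply: contraTneq pm_q => ->; rewrite inE negb_or x_q1.
have p1qF : path (adjE (F1 :|: F2)) p1 (q1 :: q).
  by apply: avoid_x; rewrite ?inE ?negb_or ?x_p1 ?x_q1 //= p1q1.
have p1_pm : connect (adjE (F1 :|: F2)) p1 pm by apply/connectP; exists (q1 :: q).
have pmxF : pm != y -> adjE (F1 :|: F2) pm x.
  by move=> pm_y; rewrite adjE_sym; apply: at_x => //; rewrite adjE_sym.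
have [p1y | p1y] := eqVneq p1 y.
  have pmS2 : pm \in S2 by apply: connect_closed closed2 _ p1_pm; rewrite p1y.
  have := closed2 pmS2 (pmxF _); rewrite -p1y (disjointFr S12 xS1) => /(_ pm_p1) //.
have xp1F : adjE (F1 :|: F2) x p1 by apply: at_x; rewrite // eq_sym.
have pmS1 : pm \in S1 by apply: connect_closed closed1 (closed1 xS1 xp1F) p1_pm.
have pm_y : pm != y by apply: contraTneq pmS1 => ->; rewrite (disjointFr S21 yS2).
exists [:: x, p1, q1 & q]; rewrite /simple_cycle uxp /= rcons_path /=.
by move: p1qF => /= /andP [-> ->]; rewrite xp1F pmxF.
Qed.

End DisjointUnion.

Lemma subtreesP E S F :
  reflect [/\ F \subset E, {in F, forall f : {set V}, f \subset S} & is_tree S F]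
          ((S, F) \in subtrees E).
Proof.
rewrite inE /is_subgraph /=.
apply: (iffP andP) => [[/andP [sFE /forallP FS] /asboolP tree] | [sFE FS tree]].
  by split=> // f fF; move/implyP: (FS f); apply.
by split; [rewrite sFE; apply/forallP => f; apply/implyP/FS | apply/asboolP].
Qed.

Lemma subtrees_subset E E' T : E \subset E' -> T \in subtrees E -> T \in subtrees E'.
Proof.
case: T => S F sEE' /subtreesP [sFE FS tree].
by apply/subtreesP; split=> //; apply: subset_trans sEE'.
Qed.

Definition vertex_tree w : graph := ([set w], set0).

Lemma vertex_tree_subtree E w : vertex_tree w \in subtrees E.
Proof.
apply/subtreesP; split; [exact: sub0set | by move=> f; rewrite inE | split].
- by apply/set0Pn; exists w; rewrite inE.
- by move=> u v /set1P -> /set1P ->; apply: connect0.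
- by case/has_cycleP => [[|u [|v p]] //]; rewrite /simple_cycle /= /adjE in_set0 !(andbF, andFb).
Qed.

Definition simple_graph E := {in E, forall f : {set V}, exists u v, u != v /\ f = [set u; v]}.

Definition isolated E w := {in E, forall f : {set V}, w \notin f}.

Lemma subtree_isolated E T w : simple_graph E -> isolated E w ->
  T \in subtrees E -> w \in T.1 -> T = vertex_tree w.
Proof.
case: T => S F simpleE isoW /subtreesP [sFE FS [_ connS _]] /= wS.
have noFw v : adjE F w v -> false.
  by move=> /(subsetP sFE) /isoW; rewrite set21.
have {}S_w : S = [set w].
  apply/setP => v; rewrite inE; apply/idP/eqP => [vS | ->//].
  case/connectP: (connS _ _ wS vS) => [[|z p]] /=; first by move=> _ ->.
  by case/andP => /noFw.
rewrite /vertex_tree -S_w; congr pair; apply/setP => f; rewrite inE; apply/negP => fF.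
have [u [v [uv uvf]]] := simpleE f (subsetP sFE f fF).
move: (FS f fF) uv; rewrite uvf S_w subUset !sub1set !inE.
by case/andP => /eqP -> /eqP ->; rewrite eqxx.
Qed.

Definition nsubtrees E (P : pred {set V}) := #|[set T in subtrees E | P T.1]|.

Lemma n_subE E : n_sub E = (nsubtrees E predT).+1.
Proof. by rewrite /n_sub addn1; congr succn; apply: eq_card => T; rewrite inE andbT. Qed.

Lemma n_sub_atE E x : n_sub_at E x = nsubtrees E (fun S => x \in S).
Proof. by []. Qed.

Lemma eq_nsubtrees E P P' : P =1 P' -> nsubtrees E P = nsubtrees E P'.
Proof. by move=> eqP'; apply: eq_card => T; rewrite !inE eqP'. Qed.

Lemma nsubtrees_isolated E w (P : pred {set V}) : simple_graph E -> isolated E w ->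
  nsubtrees E (fun S => (w \in S) && P S) = P [set w].
Proof.
move=> simpleE isoW; rewrite /nsubtrees.
have -> : [set T in subtrees E | (w \in T.1) && P T.1] =
          if P [set w] then [set vertex_tree w] else set0.
  apply/setP => T; rewrite inE; apply/and3P/idP => [[TE wT PT] | ].
    by move: PT; rewrite (subtree_isolated simpleE isoW TE wT) /= => ->; rewrite inE.
  case: ifP => [Pw | _]; rewrite inE // => /eqP ->.
  by rewrite vertex_tree_subtree /= set11.
by case: ifP; rewrite ?cards1 ?cards0.
Qed.

Lemma nsubtrees_isolated1 E w : simple_graph E -> isolated E w ->
  nsubtrees E (fun S => w \in S) = 1.
Proof.
move=> simpleE isoW; transitivity (nsubtrees E (fun S => (w \in S) && predT S)).
  by apply: eq_nsubtrees => S; rewrite andbT.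
exact: nsubtrees_isolated.
Qed.

Lemma nsubtrees_set0 : nsubtrees set0 predT = #|V|.
Proof.
have simple0 : simple_graph set0 by move=> f; rewrite inE.
have iso0 w : isolated set0 w by move=> f; rewrite inE.
have inj : injective vertex_tree.
  by move=> u v [/setP /(_ u)]; rewrite !inE eqxx => /esym/eqP.
rewrite /nsubtrees -(card_imset _ inj); apply: eq_card => T; rewrite inE andbT.
apply/idP/imsetP => [TE | [w _ ->]]; last exact: vertex_tree_subtree.
case: T TE => S F /[dup] TE /subtreesP [_ _ [/set0Pn [w wS] _ _]].
by exists w => //; apply: subtree_isolated simple0 (iso0 w) TE wS.
Qed.

Definition component F x := [set v | connect (adjE F) x v].

Definition component_tree F x : graph :=
  (component F x, [set f in F | f \subset component F x]).

Lemma mem_component F x : x \in component F x.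
Proof. by rewrite inE connect0. Qed.

Lemma component_closed F x u v :
  u \in component F x -> adjE F u v -> v \in component F x.
Proof. by rewrite !inE => xu uv; apply: connect_trans xu (connect1 uv). Qed.

Lemma component_tree_subtree E F x :
  F \subset E -> ~ has_cycle F -> component_tree F x \in subtrees E.
Proof.
move=> sFE acycF; set C := component F x; set FC := [set f in F | f \subset C].
have sFCF : FC \subset F by apply/subsetP => f; rewrite inE => /andP [].
have connC v : v \in C -> connect (adjE FC) x v.
  rewrite inE => /connectP [p xp ->]; apply/connectP; exists p => //.
  apply: (sub_path_closed (C := C)) xp; last exact: mem_component.
  move=> u w uC uw; have wC := component_closed uC uw.
  by split=> //; rewrite /adjE inE subUset !sub1set uC wC !andbT; exact: uw.
apply/subtreesP; split; first exact: subset_trans sFCF sFE.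
  by move=> f; rewrite inE => /andP [].
split; first by apply/set0Pn; exists x; apply: mem_component.
  by move=> u v /connC xu /connC xv; rewrite connect_adjEC in xu; apply: connect_trans xu xv.
by move/(has_cycle_subset sFCF).
Qed.

Lemma component_tree_disjointU S1 S2 F1 F2 x :
  {in F1, forall f : {set V}, f \subset S1} -> {in F2, forall f : {set V}, f \subset S2} ->
  [disjoint S1 & S2] -> set0 \notin F2 -> x \in S1 ->
  {in S1 &, forall u v, connect (adjE F1) u v} ->
  component_tree (F1 :|: F2) x = (S1, F1).
Proof.
move=> F1S1 F2S2 S12 F2ne xS1 connS1.
have compS1 : component (F1 :|: F2) x = S1.
  apply/setP => v; rewrite inE; apply/idP/idP => [xv | vS1].
    apply: connect_closed xS1 xv => u w uS1 uw.
    exact: (adjE_disjointU F1S1 F2S2 S12 uS1 uw).2.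
  exact: connect_adjE_subset (subsetUl _ _) (connS1 _ _ xS1 vS1).
rewrite /component_tree compS1; congr pair; apply/setP => f; rewrite !inE.
apply/andP/idP => [[/orP [// | fF2] fS1] | fF1]; last by rewrite fF1 F1S1.
have /set0Pn [u uf] : f != set0 by apply: contraNneq F2ne => <-.
by have := subsetP (F2S2 f fF2) u uf; rewrite (disjointFr S12 (subsetP fS1 u uf)).
Qed.

Definition subtree_pairs E x y : {set graph * graph} :=
  [set TT | [&& TT.1 \in subtrees E, TT.2 \in subtrees E, x \in TT.1.1, y \in TT.2.1
             & [disjoint TT.1.1 & TT.2.1]]].

Lemma subtree_pairsP E x y T1 T2 :
  reflect [/\ T1 \in subtrees E, T2 \in subtrees E, x \in T1.1, y \in T2.1 & [disjoint T1.1 & T2.1]]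
          ((T1, T2) \in subtree_pairs E x y).
Proof. by rewrite [_ \in subtree_pairs _ _ _]in_set; apply: and5P. Qed.

Lemma subtree_pairs_same E x : subtree_pairs E x x = set0.
Proof.
apply/setP => -[T1 T2]; rewrite in_set0; apply/negbTE/subtree_pairsP => -[_ _ xT1 xT2 T12].
by rewrite (disjointFr T12 xT1) in xT2.
Qed.

Definition bridge x y (TT : graph * graph) : graph :=
  (TT.1.1 :|: TT.2.1, [set x; y] |: (TT.1.2 :|: TT.2.2)).

Definition cut x y (T : graph) : graph * graph :=
  (component_tree (T.2 :\ [set x; y]) x, component_tree (T.2 :\ [set x; y]) y).

Lemma bridge_subtree E x y TT :
  TT \in subtree_pairs E x y -> bridge x y TT \in subtrees ([set x; y] |: E).
Proof.
case: TT => [[S1 F1] [S2 F2]] /subtree_pairsP [T1 T2 xS1 yS2 S12].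
case/subtreesP: T1 => [sF1E F1S1 [_ conn1 acyc1]].
case/subtreesP: T2 => [sF2E F2S2 [_ conn2 acyc2]].
have sF12 : F1 :|: F2 \subset [set x; y] |: (F1 :|: F2) := subsetU1 _ _.
have x_to v : v \in S1 :|: S2 -> connect (adjE ([set x; y] |: (F1 :|: F2))) x v.
  rewrite inE => /orP [vS1 | vS2].
    by apply: connect_adjE_subset (conn1 _ _ xS1 vS1); apply: subset_trans (subsetUl _ _) sF12.
  apply: connect_trans (connect1 _) (connect_adjE_subset _ (conn2 _ _ yS2 vS2)).
    by rewrite /adjE setU11.
  exact: subset_trans (subsetUr _ _) sF12.
apply/subtreesP; split.
- by apply: setUS; rewrite subUset sF1E.
- move=> f; rewrite in_setU1 in_setU => /or3P [/eqP -> | /F1S1 fS | /F2S2 fS].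
  + by rewrite subUset !sub1set !inE xS1 yS2 orbT.
  + exact: subset_trans fS (subsetUl _ _).
  + exact: subset_trans fS (subsetUr _ _).
split; first by apply/set0Pn; exists x; rewrite inE xS1.
  by move=> u v /x_to xu /x_to xv; rewrite connect_adjEC in xu; apply: connect_trans xu xv.
move/(has_cycle_bridge F1S1 F2S2 S12 xS1 yS2).
by case/(has_cycle_disjointU F1S1 F2S2 S12).
Qed.

Lemma cut_bridge E x y TT : [set x; y] \notin E -> set0 \notin E ->
  TT \in subtree_pairs E x y -> cut x y (bridge x y TT) = TT.
Proof.
move=> eNE set0NE; case: TT => [[S1 F1] [S2 F2]] /subtree_pairsP [T1 T2 xS1 yS2 S12].
case/subtreesP: T1 => [sF1E F1S1 [_ conn1 _]].
case/subtreesP: T2 => [sF2E F2S2 [_ conn2 _]].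
have notinE F f : F \subset E -> f \notin E -> f \notin F.
  by move=> sFE; apply: contraNN; apply: (subsetP sFE).
rewrite /cut /bridge /= setU1K; last by rewrite in_setU negb_or !(notinE _ _ _ eNE).
rewrite (component_tree_disjointU F1S1 F2S2 S12 (notinE _ _ sF2E set0NE) xS1 conn1).
have S21 : [disjoint S2 & S1] by rewrite disjoint_sym.
by rewrite setUC (component_tree_disjointU F2S2 F1S1 S21 (notinE _ _ sF1E set0NE) yS2 conn2).
Qed.

Section Cut.
Variables (E F : {set {set V}}) (S : {set V}) (x y : V).
Hypotheses (xy : x != y) (simpleE : simple_graph E).
Hypotheses (TE : (S, F) \in subtrees ([set x; y] |: E)) (eF : [set x; y] \in F).

Local Notation F' := (F :\ [set x; y]).
Local Notation A := (component F' x).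
Local Notation B := (component F' y).

Let sF'E : F' \subset E.
Proof.
apply/subsetP => f; rewrite in_setD1 => /andP [fe fF].
by case/subtreesP: TE => /subsetP /(_ f fF); rewrite in_setU1 (negbTE fe).
Qed.

Let disjointAB : [disjoint A & B].
Proof.
apply/pred0P => v /=; apply/negbTE/negP; rewrite !inE => /andP [xv yv].
case/subtreesP: TE => _ _ [_ _]; apply; apply: (has_cycle_of_connect xy eF).
by apply: connect_trans xv _; rewrite connect_adjEC.
Qed.

Lemma cut_subtree : cut x y (S, F) \in subtree_pairs E x y.
Proof.
have acycF' : ~ has_cycle F'.
  by case/subtreesP: TE => _ _ [_ _ acyc] /(has_cycle_subset (subsetDl _ _)).
by apply/subtree_pairsP; split; rewrite ?component_tree_subtree ?mem_component.
Qed.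

Let S_AB : S = A :|: B.
Proof.
case/subtreesP: TE => _ FS [_ connS _].
have := FS _ eF; rewrite subUset !sub1set => /andP [xS yS].
apply/setP => v; apply/idP/idP => [vS | ].
  have closedAB u w : u \in A :|: B -> adjE F u w -> w \in A :|: B.
    move=> uAB uw; have [uwe | uwe] := eqVneq [set u; w] [set x; y].
      by have := set22 u w; rewrite uwe !inE => /orP [] /eqP ->; rewrite connect0 ?orbT.
    have uwF' : adjE F' u w by rewrite /adjE in_setD1 uwe.
    by move: uAB; rewrite !in_setU => /orP [] /component_closed /(_ uwF') ->; rewrite ?orbT.
  by apply: connect_closed closedAB _ (connS _ _ xS vS); rewrite in_setU mem_component.
have closedS u w : u \in S -> adjE F' u w -> w \in S.
  by move=> _ /(subsetP (subsetDl _ _)) /FS; rewrite subUset !sub1set => /andP [].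
by rewrite in_setU !inE => /orP [] /(connect_closed closedS); apply.
Qed.

Let F_AB : F = [set x; y] |: ([set f in F' | f \subset A] :|: [set f in F' | f \subset B]).
Proof.
case/subtreesP: TE => _ FS _.
apply/setP => f; rewrite in_setU1 !inE; apply/idP/idP => [fF | ]; last first.
  by case/or3P => [/eqP -> // | /andP [/andP [_ ->]] // | /andP [/andP [_ ->]]].
have [// | fe] := eqVneq f [set x; y]; rewrite fF /=.
have fF' : f \in F' by rewrite in_setD1 fe fF.
have [u [w [_ f_uw]]] := simpleE (subsetP sF'E f fF').
have uwF' : adjE F' u w by rewrite /adjE -f_uw.
have := FS f fF; rewrite f_uw subUset !sub1set S_AB in_setU => /andP [/orP [] uC _].
  by rewrite !subUset !sub1set uC (component_closed uC uwF').
by rewrite !subUset !sub1set uC (component_closed uC uwF') orbT.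
Qed.

Lemma bridge_cut : bridge x y (cut x y (S, F)) = (S, F).
Proof. by rewrite /bridge /cut /= -S_AB -F_AB. Qed.

End Cut.

Lemma simple_graph_set0 E : simple_graph E -> set0 \notin E.
Proof.
by move=> simpleE; apply/negP => /simpleE [u [v [_ /setP /(_ u)]]]; rewrite !inE eqxx.
Qed.

Lemma subtrees_setU1 E x y : x != y -> [set x; y] \notin E -> simple_graph E ->
  subtrees ([set x; y] |: E) = subtrees E :|: bridge x y @: subtree_pairs E x y.
Proof.
move=> xy eNE simpleE; apply/setP => -[S F]; rewrite in_setU.
apply/idP/orP => [TE | [TE | /imsetP [TT TTxy ->]]]; last 2 first.
- exact: subtrees_subset (subsetU1 _ _) TE.
- exact: bridge_subtree.
have [eF | eNF] := boolP ([set x; y] \in F).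
  right; apply/imsetP; exists (cut x y (S, F)); first exact: cut_subtree.
  by rewrite (bridge_cut simpleE TE eF).
left; case/subtreesP: TE => sFE FS tree; apply/subtreesP; split=> //.
apply/subsetP => f fF; move: (subsetP sFE f fF); rewrite in_setU1 => /orP [/eqP fe | //].
by rewrite -fe fF in eNF.
Qed.

Lemma nsubtrees_setU1 E x y (P : pred {set V}) :
  x != y -> [set x; y] \notin E -> simple_graph E ->
  nsubtrees ([set x; y] |: E) P =
  nsubtrees E P + #|[set TT in subtree_pairs E x y | P (bridge x y TT).1]|.
Proof.
move=> xy eNE simpleE; rewrite /nsubtrees subtrees_setU1 //.
set old := [set T in subtrees E | P T.1].
set new := [set TT in subtree_pairs E x y | P (bridge x y TT).1].
have -> : [set T in subtrees E :|: bridge x y @: subtree_pairs E x y | P T.1] =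
          old :|: bridge x y @: new.
  apply/setP => T; rewrite !inE andb_orl; congr orb.
  apply/andP/imsetP => [[/imsetP [TT TTxy ->] PT] | [TT]].
    by exists TT; rewrite // inE TTxy.
  by rewrite inE => /andP [TTxy PT] ->; split=> //; apply/imsetP; exists TT.
rewrite cardsU.
have -> : old :&: bridge x y @: new = set0.
  apply/setP => -[S F]; rewrite in_setI in_set0 in_set; apply/negbTE/negP.
  case/andP => /andP [/subtreesP [sFE _ _] _] /imsetP [TT _ [_ F_TT]].
  by move/negP: eNE; apply; apply: (subsetP sFE); rewrite F_TT setU11.
rewrite cards0 subn0 card_in_imset // => TT1 TT2 /setIdP [TT1xy _] /setIdP [TT2xy _] eq12.
have set0NE := simple_graph_set0 simpleE.
by rewrite -(cut_bridge eNE set0NE TT1xy) eq12 (cut_bridge eNE set0NE TT2xy).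
Qed.

Lemma nsubtrees_setU1_through E x y (P : pred {set V}) :
  x != y -> [set x; y] \notin E -> simple_graph E -> (forall S, x \in S -> P S) ->
  nsubtrees ([set x; y] |: E) P = nsubtrees E P + #|subtree_pairs E x y|.
Proof.
move=> xy eNE simpleE Px; rewrite nsubtrees_setU1 //; congr addn.
apply: eq_card => -[T1 T2]; apply/setIdP/idP => [[] // | TTxy]; split=> //.
by case/subtree_pairsP: TTxy => _ _ xT1 _ _; apply: Px; rewrite /= in_setU xT1.
Qed.

Section Pendant.
Variables (E : {set {set V}}) (x y : V).
Hypotheses (xy : x != y) (simpleE : simple_graph E) (isoY : isolated E y).

Let eNE : [set x; y] \notin E.
Proof. by apply/negP => /isoY; rewrite set22. Qed.

Let notin_isolated T v : T \in subtrees E -> v \in T.1 -> v != y -> y \notin T.1.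
Proof.
move=> TE vT; apply: contraNN => yT.
by move: vT; rewrite (subtree_isolated simpleE isoY TE yT) inE.
Qed.

Lemma subtree_pairs_pendant :
  subtree_pairs E x y = [set (T, vertex_tree y) | T in [set T in subtrees E | x \in T.1]].
Proof.
apply/setP => -[T1 T2]; apply/idP/imsetP => [|[T /setIdP [TE xT] [-> ->]]].
  rewrite in_set /= => /and5P [T1E T2E xT1 yT2 _]; exists T1; first by rewrite inE T1E.
  by rewrite (subtree_isolated simpleE isoY T2E yT2).
rewrite in_set /= TE vertex_tree_subtree xT set11 disjoint_sym disjoints1 /=.
exact: notin_isolated TE xT xy.
Qed.

Lemma nsubtrees_pendant (P : pred {set V}) :
  nsubtrees ([set x; y] |: E) P =
  nsubtrees E P + nsubtrees E (fun S => (x \in S) && P (y |: S)).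
Proof.
rewrite nsubtrees_setU1 // subtree_pairs_pendant; congr addn.
set leaf := fun T : graph => (T, vertex_tree y).
have -> : [set TT in leaf @: [set T in subtrees E | x \in T.1] | P (bridge x y TT).1] =
          leaf @: [set T in subtrees E | (x \in T.1) && P (y |: T.1)].
  apply/setP => TT; apply/setIdP/imsetP => [[/imsetP [T /setIdP [TE xT] ->]] | [T]].
    by rewrite /= setUC => PT; exists T; rewrite // inE TE xT.
  rewrite inE => /and3P [TE xT PT] ->; split; last by rewrite /= setUC.
  by apply/imsetP; exists T; rewrite // inE TE.
by rewrite card_imset // => T1 T2 [].
Qed.

Lemma nsubtrees_pendant_all :
  nsubtrees ([set x; y] |: E) predT = nsubtrees E predT + nsubtrees E (fun S => x \in S).
Proof. by rewrite nsubtrees_pendant; congr addn; apply: eq_nsubtrees => S; rewrite andbT. Qed.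

Lemma nsubtrees_pendant_leaf :
  nsubtrees ([set x; y] |: E) (fun S => y \in S) = (nsubtrees E (fun S => x \in S)).+1.
Proof.
rewrite nsubtrees_pendant nsubtrees_isolated1 // add1n; congr succn.
by apply: eq_nsubtrees => S; rewrite setU11 andbT.
Qed.

Lemma nsubtrees_pendant_root r : r != y ->
  nsubtrees ([set x; y] |: E) (fun S => r \in S) =
  nsubtrees E (fun S => r \in S) + nsubtrees E (fun S => (x \in S) && (r \in S)).
Proof.
move=> ry; rewrite nsubtrees_pendant; congr addn.
by apply: eq_nsubtrees => S; rewrite in_setU1 (negbTE ry).
Qed.

Lemma nsubtrees_pendant_leaf_root r : r != y ->
  nsubtrees ([set x; y] |: E) (fun S => (y \in S) && (r \in S)) =
  nsubtrees E (fun S => (x \in S) && (r \in S)).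
Proof.
move=> ry; rewrite nsubtrees_pendant nsubtrees_isolated // inE (negbTE ry) add0n.
by apply: eq_nsubtrees => S; rewrite !in_setU1 eqxx (negbTE ry).
Qed.

Let leaf_pair T : graph * graph := (T, vertex_tree y).
Let grow_pair (TT : graph * graph) := (TT.1, bridge x y (leaf_pair TT.2)).

Let leaf_pair_in T : T \in subtrees E -> x \in T.1 -> leaf_pair T \in subtree_pairs E x y.
Proof.
by move=> TE xT; rewrite subtree_pairs_pendant; apply/imsetP; exists T => //; apply/setIdP.
Qed.

Let subtree_avoiding T : T \in subtrees ([set x; y] |: E) -> y \notin T.1 -> T \in subtrees E.
Proof.
rewrite subtrees_setU1 // subtree_pairs_pendant in_setU.
case/orP => [// | /imsetP [_ /imsetP [A _ ->] ->]].
by rewrite /= in_setU set11 orbT.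
Qed.

Let subtree_through T : T \in subtrees ([set x; y] |: E) -> y \in T.1 ->
  T = vertex_tree y \/ exists2 A, (A \in subtrees E) && (x \in A.1) & T = bridge x y (leaf_pair A).
Proof.
rewrite subtrees_setU1 // subtree_pairs_pendant in_setU => /orP [TE yT | ].
  by left; apply: subtree_isolated simpleE isoY TE yT.
by case/imsetP => _ /imsetP [A /setIdP [AE xA] ->] -> _; right; exists A; rewrite ?AE.
Qed.

Let subtree_pairs_pendant_at u : u != y ->
  subtree_pairs ([set x; y] |: E) u y =
  leaf_pair @: [set T in subtrees E | u \in T.1] :|: grow_pair @: subtree_pairs E u x.
Proof.
move=> uy; apply/setP => -[T1 T2]; rewrite in_setU in_set /=; apply/and5P/orP.
  case=> T1E' T2E' uT1 yT2 T12; have T1E : T1 \in subtrees E.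
    by apply: subtree_avoiding T1E' _; rewrite (disjointFr _ yT2) // disjoint_sym.
  case: (subtree_through T2E' yT2) => [T2_leaf | [A /andP [AE xA] T2_bridge]]; subst T2.
    by left; apply/imsetP; exists T1 => //; apply/setIdP.
  right; apply/imsetP; exists (T1, A) => //; rewrite in_set /= T1E AE uT1 xA.
  by move: T12; rewrite /= disjointsU1 => /andP [].
case=> /imsetP [[T A]].
  move=> /setIdP [TE uT] [-> ->]; split=> //; first exact: subtrees_subset (subsetU1 _ _) TE.
  - exact: vertex_tree_subtree.
  - exact: set11.
  - by rewrite disjoint_sym disjoints1; apply: notin_isolated TE uT uy.
rewrite in_set /= => /and5P [TE AE uT xA TA] [-> ->]; split=> //.
- exact: subtrees_subset (subsetU1 _ _) TE.
- exact/bridge_subtree/leaf_pair_in.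
- by rewrite /= in_setU set11 orbT.
- by rewrite /= disjointsU1 TA; apply: notin_isolated TE uT uy.
Qed.

Lemma card_subtree_pairs_pendant u : u != y ->
  #|subtree_pairs ([set x; y] |: E) u y| = nsubtrees E (fun S => u \in S) + #|subtree_pairs E u x|.
Proof.
move=> uy; rewrite subtree_pairs_pendant_at // cardsU.
have -> : leaf_pair @: [set T in subtrees E | u \in T.1] :&: grow_pair @: subtree_pairs E u x =
          set0.
  apply/setP => TT; rewrite in_setI in_set0; apply/negbTE/negP.
  case/andP => /imsetP [T _ ->] /imsetP [TT' _ [_ _ /setP /(_ [set x; y])]].
  by rewrite in_set0 setU11.
rewrite cards0 subn0 card_imset => [|T1 T2 []//]; congr addn.
rewrite card_in_imset // => -[T1 A1] [T2 A2] /subtree_pairsP [_ A1E _ xA1 _].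
move=> /subtree_pairsP [_ A2E _ xA2 _] eq12.
have /= eqT := congr1 fst eq12; have /= eqB := congr1 snd eq12.
have set0NE := simple_graph_set0 simpleE.
have := cut_bridge eNE set0NE (leaf_pair_in A1E xA1).
by rewrite eqB (cut_bridge eNE set0NE (leaf_pair_in A2E xA2)) eqT => -[->].
Qed.

End Pendant.

Fixpoint attach_path E x (s : seq V) : {set {set V}} :=
  if s is y :: s' then attach_path ([set x; y] |: E) y s' else E.

Definition attachable E x s :=
  [/\ simple_graph E, uniq (x :: s) & {in s, forall z : V, isolated E z}].

Lemma attachableS E x y s : attachable E x (y :: s) ->
  [/\ simple_graph E, x != y, isolated E y & attachable ([set x; y] |: E) y s].
Proof.
case=> simpleE /= /andP [/norP [xy xs] /andP [ys us]] isoS.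
have isoY : isolated E y by apply: isoS; rewrite mem_head.
split=> //; split; [ | by rewrite /= ys us | ].
  by move=> f; rewrite in_setU1 => /orP [/eqP -> | /simpleE //]; exists x, y.
move=> z zs f; rewrite in_setU1 => /orP [/eqP -> | fE]; last by apply: isoS; rewrite // inE zs orbT.
rewrite in_set2 negb_or; apply/andP; split.
  by apply: contraNneq xs => <-.
by apply: contraNneq ys => <-.
Qed.

Lemma mem_attach_path E x s f : f \in attach_path E x s <->
  f \in E \/ exists2 i, i < size s & f = [set nth x (x :: s) i; nth x s i].
Proof.
elim: s E x => [|y s IHs] E x /=.
  by split=> [fE | [fE | [i]]] //; left.
rewrite IHs in_setU1; split=> [[/orP [/eqP -> | fE] | [i i_s f_i]] | [fE | [[|i] i_s f_i]]].
- by right; exists 0.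
- by left.
- by right; exists i.+1; rewrite // f_i /= !(set_nth_default x) // ltnW.
- by left; rewrite fE orbT.
- by left; rewrite f_i eqxx.
- by right; exists i; rewrite // f_i /= !(set_nth_default y) // ltnW.
Qed.

Lemma attachable_simple E x s : attachable E x s -> simple_graph (attach_path E x s).
Proof.
elim: s E x => [|y s IHs] E x; first by case.
by case/attachableS => _ _ _ /IHs.
Qed.

Lemma isolated_attach_path E x s z : z \notin x :: s -> isolated E z ->
  isolated (attach_path E x s) z.
Proof.
elim: s E x => [//|y s IHs] E x; rewrite !inE !negb_or => /and3P [zx zy zs] isoZ.
apply: IHs; first by rewrite inE negb_or zy.
by move=> f; rewrite in_setU1 => /orP [/eqP -> | /isoZ //]; rewrite in_set2 negb_or zx.
Qed.

Lemma nsubtrees_attach_all s E x : attachable E x s ->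
  nsubtrees (attach_path E x s) predT =
  nsubtrees E predT + size s * nsubtrees E (fun S => x \in S) + 'C(size s, 2).
Proof.
elim: s E x => [|y s IHs] E x; first by rewrite !addn0.
case/attachableS => simpleE xy isoY /IHs /= ->.
rewrite nsubtrees_pendant_all // nsubtrees_pendant_leaf // binS bin1; lia.
Qed.

Lemma nsubtrees_attach_root r s E x : attachable E x s -> r \notin s ->
  nsubtrees (attach_path E x s) (fun S => r \in S) =
  nsubtrees E (fun S => r \in S) + size s * nsubtrees E (fun S => (x \in S) && (r \in S)).
Proof.
elim: s E x => [|y s IHs] E x; first by rewrite addn0.
case/attachableS => simpleE xy isoY ok.
rewrite inE negb_or => /andP [ry rs] /=; rewrite IHs // nsubtrees_pendant_root //.
by rewrite nsubtrees_pendant_leaf_root // mulSn addnA.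
Qed.

Lemma card_subtree_pairs_attach r s E x : attachable E x s -> r \notin s ->
  #|subtree_pairs (attach_path E x s) r (last x s)| =
  #|subtree_pairs E r x| + size s * nsubtrees E (fun S => r \in S) +
  'C(size s, 2) * nsubtrees E (fun S => (x \in S) && (r \in S)).
Proof.
elim: s E x => [|y s IHs] E x; first by rewrite !addn0.
case/attachableS => simpleE xy isoY ok.
rewrite inE negb_or => /andP [ry rs] /=; rewrite IHs // card_subtree_pairs_pendant //.
rewrite nsubtrees_pendant_root // nsubtrees_pendant_leaf_root // binS bin1.
(* [nia] fails unless [#|_|] is abstracted. *)
set n_r := nsubtrees E _; set c := nsubtrees E _; set p := #|_|; nia.
Qed.

End Subtrees.

Lemma double_bin2 n : 2 * 'C(n, 2) = n * n.-1.
Proof. by elim: n => // n IHn; rewrite binS bin1 mulnDr IHn; case: n {IHn} => //= n; nia. Qed.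

Section CyclePendantPath.
Variables (a b : nat) (root : 'I_(a + b)).
Hypotheses (a_gt2 : 2 < a) (root0 : nat_of_ord root = 0).

(* Out-of-range indices are sent to [root]; all indices used below are < a + b. *)
Definition vtx (i : nat) : 'I_(a + b) := insubd root i.

Lemma val_vtx i : i < a + b -> val (vtx i) = i.
Proof. by move=> iab; rewrite val_insubd iab. Qed.

Lemma eq_vtx i j : i < a + b -> j < a + b -> (vtx i == vtx j) = (i == j).
Proof. by move=> iab jab; rewrite -val_eqE /= !val_vtx. Qed.

Lemma vtx0 : vtx 0 = root.
Proof. by rewrite -[0]root0 /vtx valKd. Qed.

Definition cycle_vertices := [seq vtx i | i <- iota 1 a.-1].
Definition pendant_vertices := [seq vtx i | i <- iota a b].

Definition path_edges := attach_path set0 root cycle_vertices.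
Definition cycle_edges := [set root; vtx a.-1] |: path_edges.

Lemma mem_vtx_iota i m n : i < a + b -> m + n <= a + b ->
  (vtx i \in [seq vtx j | j <- iota m n]) = (m <= i < m + n).
Proof.
move=> iab mnab; rewrite -mem_iota; apply/mapP/idP => [[j jmn /eqP] | imn]; last by exists i.
by rewrite eq_vtx // => [/eqP -> // | ]; move: jmn; rewrite mem_iota; lia.
Qed.

Lemma uniq_vtx m n : m + n <= a + b -> uniq [seq vtx i | i <- iota m n].
Proof.
move=> mnab; rewrite map_inj_in_uniq ?iota_uniq // => i j.
by rewrite !mem_iota => /andP [_ iab] /andP [_ jab] /eqP; rewrite eq_vtx; [move/eqP | lia | lia].
Qed.

Lemma root_cycle_vertices : root :: cycle_vertices = [seq vtx i | i <- iota 0 a].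
Proof. by rewrite -[in iota 0 a](prednK (ltnW (ltnW a_gt2))) /= vtx0. Qed.

Lemma nth_root_cycle i : i < a -> nth root (root :: cycle_vertices) i = vtx i.
Proof. by move=> ia; rewrite root_cycle_vertices (nth_map 0) ?nth_iota ?size_iota. Qed.

Lemma nth_cycle i : i < a.-1 -> nth root cycle_vertices i = vtx i.+1.
Proof. by move=> ia; rewrite (nth_map 0) ?nth_iota ?size_iota. Qed.

Lemma size_cycle_vertices : size cycle_vertices = a.-1.
Proof. by rewrite size_map size_iota. Qed.

Lemma last_cycle_vertices : last root cycle_vertices = vtx a.-1.
Proof. by rewrite (last_nth root) size_cycle_vertices nth_root_cycle // prednK //; lia. Qed.

Lemma mem_path_edges f : f \in path_edges <-> exists2 i, i.+1 < a & f = [set vtx i; vtx i.+1].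
Proof.
rewrite mem_attach_path inE size_cycle_vertices.
split=> [[// | [i ia ->]] | [i ia ->]]; [exists i | right; exists i]; try lia.
  by rewrite nth_root_cycle ?nth_cycle //; lia.
by rewrite nth_root_cycle ?nth_cycle //; lia.
Qed.

Lemma attachable_path : attachable set0 root cycle_vertices.
Proof.
split; [by move=> f; rewrite inE | | by move=> z _ f; rewrite inE].
by rewrite root_cycle_vertices uniq_vtx //; lia.
Qed.

Let simple0 : simple_graph (set0 : {set {set 'I_(a + b)}}).
Proof. by move=> f; rewrite inE. Qed.

Let isolated0 w : isolated (set0 : {set {set 'I_(a + b)}}) w.
Proof. by move=> f; rewrite inE. Qed.

Let nsubtrees0_root2 : nsubtrees set0 (fun S => (root \in S) && (root \in S)) = 1.
Proof.
rewrite -(nsubtrees_isolated1 simple0 (isolated0 root)).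
by apply: eq_nsubtrees => S; rewrite andbb.
Qed.

Lemma root_notin_cycle_vertices : root \notin cycle_vertices.
Proof. by case: attachable_path => _ /andP []. Qed.

(* The vertices a, ..., a + b - 1, not yet attached, count as one-vertex subtrees. *)
Lemma nsubtrees_path_all : nsubtrees path_edges predT = a + b + a.-1 + 'C(a.-1, 2).
Proof.
rewrite nsubtrees_attach_all; last exact: attachable_path.
rewrite nsubtrees_set0 card_ord.
by rewrite size_cycle_vertices nsubtrees_isolated1 // muln1.
Qed.

Lemma nsubtrees_path_root : nsubtrees path_edges (fun S => root \in S) = a.
Proof.
rewrite nsubtrees_attach_root ?root_notin_cycle_vertices //; last exact: attachable_path.
by rewrite nsubtrees_isolated1 // nsubtrees0_root2 size_cycle_vertices muln1 add1n prednK //; lia.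
Qed.

Lemma card_pairs_path : #|subtree_pairs path_edges root (vtx a.-1)| = 'C(a, 2).
Proof.
rewrite -last_cycle_vertices card_subtree_pairs_attach ?root_notin_cycle_vertices //;
  last exact: attachable_path.
rewrite subtree_pairs_same cards0 nsubtrees_isolated1 // nsubtrees0_root2 size_cycle_vertices.
by rewrite -[in RHS](prednK (ltnW (ltnW a_gt2))) binS bin1 !muln1 add0n addnC.
Qed.

Lemma root_neq_last : root != vtx a.-1.
Proof. by rewrite -vtx0 eq_vtx; lia. Qed.

Lemma cycle_edge_notin_path : [set root; vtx a.-1] \notin path_edges.
Proof.
apply/negP => /mem_path_edges [i ia e].
have := set21 root (vtx a.-1); have := set22 root (vtx a.-1).
by rewrite e -vtx0 !in_set2 !eq_vtx; lia.
Qed.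

Lemma simple_path : simple_graph path_edges.
Proof. exact: attachable_simple attachable_path. Qed.

Lemma nsubtrees_cycle_all : nsubtrees cycle_edges predT = a ^ 2 + b.
Proof.
rewrite nsubtrees_setU1_through ?root_neq_last ?cycle_edge_notin_path //; last exact: simple_path.
rewrite nsubtrees_path_all card_pairs_path -[in LHS](prednK (ltnW (ltnW a_gt2))) binS bin1.
have := double_bin2 a.-1; set c := 'C(a.-1, 2); nia.
Qed.

Lemma nsubtrees_cycle_root : nsubtrees cycle_edges (fun S => root \in S) = 'C(a.+1, 2).
Proof.
rewrite nsubtrees_setU1_through ?root_neq_last ?cycle_edge_notin_path //; last exact: simple_path.
by rewrite nsubtrees_path_root card_pairs_path binS bin1 addnC.
Qed.

Lemma root_notin_pendant : root \notin pendant_vertices.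
Proof. by rewrite -vtx0 mem_vtx_iota; lia. Qed.

Lemma attachable_pendant : attachable cycle_edges root pendant_vertices.
Proof.
split.
- move=> f; rewrite in_setU1 => /orP [/eqP -> | /simple_path //].
  by exists root, (vtx a.-1); rewrite root_neq_last.
- by rewrite /= root_notin_pendant uniq_vtx.
move=> z /mapP [i]; rewrite mem_iota => /andP [ai iab] -> f.
rewrite in_setU1 => /orP [/eqP -> | ]; first by rewrite in_set2 -vtx0 !eq_vtx; lia.
by apply: isolated_attach_path; rewrite // root_cycle_vertices mem_vtx_iota; lia.
Qed.

Lemma nsubtrees_cpp_root :
  nsubtrees (attach_path cycle_edges root pendant_vertices) (fun S => root \in S) =
  b.+1 * 'C(a.+1, 2).
Proof.
rewrite nsubtrees_attach_root ?root_notin_pendant //; last exact: attachable_pendant.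
have -> : nsubtrees cycle_edges (fun S => (root \in S) && (root \in S)) =
          nsubtrees cycle_edges (fun S => root \in S).
  by apply: eq_nsubtrees => S; rewrite andbb.
by rewrite nsubtrees_cycle_root size_map size_iota mulSn.
Qed.

Lemma nsubtrees_cpp_all :
  nsubtrees (attach_path cycle_edges root pendant_vertices) predT =
  a ^ 2 + 'C(b.+1, 2) + b * 'C(a.+1, 2).
Proof.
rewrite nsubtrees_attach_all; last exact: attachable_pendant.
by rewrite nsubtrees_cycle_all nsubtrees_cycle_root size_map size_iota (binS b) bin1; lia.
Qed.

Definition pendant_parent k := if k is k'.+1 then a + k' else 0.

Lemma nth_pendant_edge k : k < b ->
  [set nth root (root :: pendant_vertices) k; nth root pendant_vertices k] =
  [set vtx (pendant_parent k); vtx (a + k)].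
Proof.
have nth_pendant j : j < b -> nth root pendant_vertices j = vtx (a + j).
  by move=> jb; rewrite (nth_map 0) ?nth_iota ?size_iota.
by case: k => [|k] kb /=; rewrite !nth_pendant ?vtx0 //; lia.
Qed.

Lemma mem_cpp_graph f :
  f \in attach_path cycle_edges root pendant_vertices <->
  [\/ f = [set root; vtx a.-1], exists2 i, i.+1 < a & f = [set vtx i; vtx i.+1]
    | exists2 k, k < b & f = [set vtx (pendant_parent k); vtx (a + k)]].
Proof.
rewrite mem_attach_path in_setU1 size_map size_iota.
split=> [[/orP [/eqP -> | /mem_path_edges] | [k kb ->]] | [-> | /mem_path_edges | [k kb ->]]].
- by constructor 1.
- by constructor 2.
- by constructor 3; exists k; rewrite ?nth_pendant_edge.
- by left; rewrite eqxx.
- by move=> fP; left; rewrite fP orbT.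
- by right; exists k; rewrite ?nth_pendant_edge.
Qed.

Lemma cpp_adj_edge i j : i < a + b -> j < a + b -> cpp_adj a b i j ->
  [set vtx i; vtx j] \in attach_path cycle_edges root pendant_vertices.
Proof.
move=> iab jab; rewrite /cpp_adj mem_cpp_graph.
case/or3P => [/and3P [ia ja /eqP ji] | /and3P [/eqP -> /eqP -> b0] | /and3P [ai /eqP -> jab']].
- have [i1a | ai1] := ltnP i.+1 a; first by apply: Or32; exists i; rewrite // ji modn_small.
  have i_last : i = a.-1 by lia.
  have j0 : j = 0 by rewrite ji i_last prednK ?modnn //; lia.
  by apply: Or31; rewrite i_last j0 vtx0 setUC.
- by apply: Or33; exists 0; rewrite ?addn0.
- apply: Or33; exists (i - a).+1; first lia.
  by rewrite /pendant_parent; congr [set vtx _; vtx _]; lia.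
Qed.

Lemma cpp_edge_adj f : f \in attach_path cycle_edges root pendant_vertices ->
  exists i j, [/\ i < a + b, j < a + b, cpp_adj a b i j & f = [set vtx i; vtx j]].
Proof.
rewrite mem_cpp_graph /cpp_adj => -[-> | [i ia ->] | [k kb ->]].
- exists a.-1, 0; rewrite -vtx0 setUC prednK ?modnn; last lia.
  split=> //; lia.
- by exists i, i.+1; rewrite modn_small //; split=> //; lia.
- by exists (pendant_parent k), (a + k); case: k kb => [|k] kb /=; split=> //; lia.
Qed.

Lemma cpp_edgesE : cpp_edges a b = attach_path cycle_edges root pendant_vertices.
Proof.
apply/setP => f; rewrite inE; apply/existsP/idP => [[u /existsP [v /andP [/eqP -> uv]]] | ].
  by rewrite -[u](valKd root) -[v](valKd root); apply: cpp_adj_edge; rewrite ?ltn_ord.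
case/cpp_edge_adj => i [j [iab jab ij ->]].
by exists (vtx i); apply/existsP; exists (vtx j); rewrite eqxx !val_vtx.
Qed.

Lemma n_sub_cpp : n_sub (cpp_edges a b) = a ^ 2 + 'C(b.+1, 2) + b * 'C(a.+1, 2) + 1.
Proof. by rewrite n_subE cpp_edgesE nsubtrees_cpp_all addn1. Qed.

Lemma n_sub_at_cpp : n_sub_at (cpp_edges a b) root = b.+1 * 'C(a.+1, 2).
Proof. by rewrite n_sub_atE cpp_edgesE nsubtrees_cpp_root. Qed.

End CyclePendantPath.

Lemma swap_le_eq (f : nat -> nat -> nat) m n :
  n <= m -> (n < m -> f n m < f m n) -> f n m <= f m n /\ (f m n = f n m <-> m = n).
Proof.
case: ltngtP => // [lt_nm _ /(_ isT) lt_f | -> //].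
by split; [exact: ltnW | split=> eq_mn; lia].
Qed.

Lemma n_sub_cpp_swap_lt n m : 0 < n -> n < m ->
  n ^ 2 + 'C(m.+1, 2) + m * 'C(n.+1, 2) + 1 < m ^ 2 + 'C(n.+1, 2) + n * 'C(m.+1, 2) + 1.
Proof.
move=> n_gt0 lt_nm; move: (double_bin2 n.+1) (double_bin2 m.+1).
by set x := 'C(n.+1, 2); set y := 'C(m.+1, 2) => /= hx hy; nia.
Qed.

Lemma n_sub_at_cpp_swap_lt n m : n < m -> m.+1 * 'C(n.+1, 2) < n.+1 * 'C(m.+1, 2).
Proof.
move=> lt_nm; move: (double_bin2 n.+1) (double_bin2 m.+1).
by set x := 'C(n.+1, 2); set y := 'C(m.+1, 2) => /= hx hy; nia.
Qed.

Theorem lemma7 (l1 l2 : nat) (u : 'I_(l1 + l2)) (v : 'I_(l2 + l1)) :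
  3 <= l2 -> l2 <= l1 -> nat_of_ord u = 0 -> nat_of_ord v = 0 ->
  [/\ n_sub (cpp_edges l2 l1) <= n_sub (cpp_edges l1 l2),
      n_sub_at (cpp_edges l2 l1) v <= n_sub_at (cpp_edges l1 l2) u,
      n_sub (cpp_edges l1 l2) = n_sub (cpp_edges l2 l1) <-> l1 = l2 &
      n_sub_at (cpp_edges l1 l2) u = n_sub_at (cpp_edges l2 l1) v <-> l1 = l2].
Proof.
move=> l2_gt2 l21 u0 v0; have l1_gt2 : 2 < l1 := leq_trans l2_gt2 l21.
rewrite (n_sub_cpp l1_gt2 u0) (n_sub_cpp l2_gt2 v0).
rewrite (n_sub_at_cpp l1_gt2 u0) (n_sub_at_cpp l2_gt2 v0).
have [le_sub eq_sub] :=
  swap_le_eq (f := fun a b => a ^ 2 + 'C(b.+1, 2) + b * 'C(a.+1, 2) + 1) l21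
             (n_sub_cpp_swap_lt (ltnW (ltnW l2_gt2))).
have [le_at eq_at] :=
  swap_le_eq (f := fun a b => b.+1 * 'C(a.+1, 2)) l21 (@n_sub_at_cpp_swap_lt l2 l1).
by split.
Qed.
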